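(* Let $p\geq 1$, let $\boldsymbol \Omega$ be a $p \times p$ positive definite matrix and let $0 < c < 1/2$. Let $\boldsymbol \beta$ have the structured normal-gamma (SNG) prior with parameters $c, \boldsymbol \Omega$, with marginal density $$p(\boldsymbol b \mid c, \boldsymbol \Omega) = \int_{(0,\infty)^p} \Big(\prod_{i=1}^p \frac{1}{s_i}\, g_c(s_i)\Big)\, \phi_{\boldsymbol \Omega}(\boldsymbol b / \boldsymbol s)\, d\boldsymbol s \in [0,+\infty],$$ where $\phi_{\boldsymbol \Omega}$ is the $\text{normal}(\boldsymbol 0, \boldsymbol \Omega)$ density, $\boldsymbol b/\boldsymbol s$ is elementwise division, and $g_c$ is the density of $s_i = \sqrt{s_i^2}$ when $s_i^2 \sim \text{gamma}(\text{shape } c, \text{rate } c)$, i.e. $g_c(s) \propto s^{2c-1} e^{-c s^2}$ on $(0,\infty)$. If $\boldsymbol b \in \mathbb{R}^p$ satisfies $b_j = 0$ for some $j \in \{1, \dots, p\}$, then $p(\boldsymbol b \mid c, \boldsymbol \Omega) = +\infty$.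
   Context: The SNG prior is the distribution of $\boldsymbol \beta = \boldsymbol s \circ \boldsymbol z$ (elementwise product), where $\boldsymbol z \sim \text{normal}(\boldsymbol 0, \boldsymbol \Omega)$ is independent of $\boldsymbol s$, and $s_1^2,\dots,s_p^2$ are i.i.d. gamma with shape $c$ and rate $c$ (so $\mathbb{E}[s_j^2]=1$), $s_j>0$. The displayed integral is the marginal (joint) prior density of $\boldsymbol \beta$ at $\boldsymbol b$, allowed to equal $+\infty$. *)

From HB Require Import structures.
From mathcomp Require Import all_boot all_order all_algebra.
From mathcomp Require Import all_classical all_reals all_analysis.
Set Implicit Arguments. Unset Strict Implicit. Unset Printing Implicit Defensive.
Import Order.TTheory GRing.Theory Num.Theory.
Import numFieldNormedType.Exports.
Local Open Scope classical_set_scope.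
Local Open Scope ring_scope.

Section SNG.
Variable R : realType.

Definition Gamma_fun (c : R) : R :=
  fine (\int[@lebesgue_measure R]_(x in `]0%R, +oo[) ((x `^ (c - 1)) * expR (- x))%:E)%E.

(* density of s = sqrt(s2), s2 ~ gamma(shape c, rate c), on (0, oo):
   g_c(s) = 2 c^c / Gamma(c) * s^(2c-1) * exp(-c s^2) *)
Definition g_dens (c s : R) : R :=
  (2 * c `^ c / Gamma_fun c) * (s `^ (2 * c - 1)) * expR (- (c * s ^+ 2)).

Definition posdef (p : nat) (Om : 'M[R]_p) : Prop :=
  Om^T = Om /\ forall x : 'rV[R]_p, x != 0 -> 0 < (x *m Om *m x^T) 0 0.

Definition normal_dens (p : nat) (Om : 'M[R]_p) (x : 'rV[R]_p) : R :=
  (Num.sqrt ((2 * pi) ^+ p * \det Om))^-1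
  * expR (- ((x *m invmx Om *m x^T) 0 0) / 2).

Definition upd (s : nat -> R) (n : nat) (t : R) : nat -> R :=
  fun k => if k == n then t else s k.

(* iterated Lebesgue integral over (0,oo)^n of a function of the first n
   coordinates; for non-negative measurable integrands this equals the
   integral over (0,oo)^n w.r.t. n-dimensional Lebesgue measure (Tonelli). *)
Fixpoint iint_pos (n : nat) (F : (nat -> R) -> \bar R) : \bar R :=
  match n with
  | O => F (fun _ => 0)
  | n'.+1 => iint_pos n' (fun s =>
      (\int[@lebesgue_measure R]_(t in `]0%R, +oo[) F (upd s n' t))%E)
  end.

Definition sng_density (p : nat) (c : R) (Om : 'M[R]_p) (b : 'rV[R]_p) : \bar R :=
  iint_pos p (fun s =>
    ((\prod_(i < p) ((s i)^-1 * g_dens c (s i)))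
     * normal_dens Om (\row_(i < p) (b 0 i / s i)))%:E).

End SNG.

(* If b_j = 0, the normal factor phi(b / s) of the integrand stays bounded
   below by a positive constant as long as the other scales s_i (i <> j) lie
   in ]1, 2], whatever the value of s_j.  The radial factor s^-1 g_c(s) is
   nonincreasing when 2c <= 1, so on the box where s_j lies in ]0, e] and the
   other s_i in ]1, 2] the integrand is at least a constant times e^-1 g_c(e);
   integrating over the box gives a lower bound K g_c(e) >= K' e^(2c - 1),
   which is unbounded as e -> 0 because 2c - 1 < 0. *)

From HB Require Import structures.
From mathcomp Require Import all_boot all_order all_algebra.
From mathcomp Require Import all_classical all_reals all_analysis.
From mathcomp Require Import measurable_realfun ring lra.
Import Order.TTheory GRing.Theory Num.Theory.
Import numFieldNormedType.Exports.
Local Open Scope classical_set_scope.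
Local Open Scope ring_scope.

Lemma ge0_le_integral_nonmeas d (T : measurableType d) (R : realType)
    (mu : {measure set T -> \bar R}) (D : set T) (f g : T -> \bar R) :
  (forall x, D x -> (0 <= f x)%E) -> (forall x, D x -> (f x <= g x)%E) ->
  (\int[mu]_(x in D) f x <= \int[mu]_(x in D) g x)%E.
Proof.
move=> f0 fg.
have g0 x : D x -> (0 <= g x)%E by move=> Dx; exact: le_trans (f0 _ Dx) (fg _ Dx).
rewrite (ge0_integralE mu f0) (ge0_integralE mu g0) /=.
apply: ereal_sup_le => _ [h /= hf <-]; exists h => //= x.
apply: le_trans (hf x) _; rewrite /patch; case: ifP => // /set_mem Dx.
exact: fg.
Qed.

Section sng_prior.
Set Implicit Arguments.
Unset Strict Implicit.
Variable R : realType.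
Local Notation mu := (@lebesgue_measure R).

Lemma le0_ger_powR (r t u : R) : r <= 0 -> 0 < t -> t <= u -> u `^ r <= t `^ r.
Proof.
move=> r0 t0 tu; rewrite /powR !gt_eqF ?(lt_le_trans t0 tu) // ler_expR.
by apply: ler_wnM2l => //; rewrite ler_ln // posrE (lt_le_trans t0 tu).
Qed.

Lemma integral_scaled_indic_itv_oc (k u v : R) : 0 <= k -> 0 <= u -> u < v ->
  (\int[mu]_(x in `]0%R, +oo[) (k * \1_(`]u, v] : set R) x)%:E
    = (k * (v - u))%:E)%E.
Proof.
move=> k0 u0 uv.
under eq_integral do rewrite EFinM.
rewrite ge0_integralZl_EFin //; last exact/measurable_EFinP/measurable_indic.
rewrite integral_indic // setIidl; last first.
  by move=> x /=; rewrite !in_itv /= andbT => /andP[/(le_lt_trans u0)].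
rewrite [X in (_ * X)%E]lebesgue_measure_itv /= lte_fin uv.
by rewrite -EFinB -EFinM.
Qed.

Lemma integral_powR_itv_a1 (c a : R) : 0 < c -> 0 < a -> a < 1 ->
  (\int[mu]_(x in `[a, 1%R]) (x `^ (c - 1))%:E = (c^-1 * (1 - a `^ c))%:E)%E.
Proof.
move=> c0 a0 a1.
pose F (y : R) := c^-1 * y `^ c.
have dF (y : R) : 0 < y -> is_derive y 1 F (c^-1 * (c * y `^ (c - 1))).
  by move=> y0; apply: is_deriveZ; exact: is_derive1_powR.
have cF (y : R) : 0 < y -> {for y, continuous F}.
  move=> y0; apply: differentiable_continuous; apply/derivable1_diffP.
  by have [] := dF y y0.
rewrite (@continuous_FTC2 _ _ F) //.
- by rewrite /F powR1 -EFinB mulrBr mulr1.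
- apply: derivable_within_continuous => y; rewrite in_itv /= => /andP[ay _].
  by apply: derivable_powR; rewrite in_itv /= andbT (lt_le_trans a0 ay).
- split.
  + move=> y; rewrite in_itv /= => /andP[ay _].
    by have [] := dF y (lt_trans a0 ay).
  + exact/cvg_at_right_filter/cF.
  + exact/cvg_at_left_filter/cF.
- move=> y; rewrite in_itv /= => /andP[ay _].
  rewrite derive1E; have [_ ->] := dF y (lt_trans a0 ay).
  by rewrite mulrA mulVf ?mul1r // gt_eqF.
Qed.

Lemma integral_powR_itv_01_le (c : R) : 0 < c ->
  (\int[mu]_(x in `]0%R, 1%R]) (x `^ (c - 1))%:E <= c^-1%:E)%E.
Proof.
move=> c0.
set D := (`]0%R, 1%R]%classic : set R).
have mD : measurable D by exact: measurable_itv.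
pose a (n : nat) : R := n.+2%:R^-1.
have a0 n : 0 < a n by rewrite /a invr_gt0.
have a1 n : a n < 1 by rewrite /a invf_lt1 // ltr1n.
have a_anti m n : (m <= n)%N -> a n <= a m.
  by move=> mn; rewrite /a lef_pV2 ?posrE // ler_nat.
pose g n x := (x `^ (c - 1) * \1_(`[a n, 1%R] : set R) x)%:E.
have mg n : measurable_fun D (g n).
  apply/measurable_EFinP/measurable_funM; last exact: measurable_indic.
  exact: measurable_funTS (measurable_powR _).
have g0 n x : D x -> (0 <= g n x)%E.
  by move=> _; rewrite lee_fin mulr_ge0 ?powR_ge0.
have g_nd x : D x -> {homo g^~ x : m n / (m <= n)%N >-> (m <= n)%E}.
  move=> _ m n mn; rewrite lee_fin ler_wpM2l ?powR_ge0 // !indicE.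
  have [/set_mem|] := boolP (x \in (`[a m, 1%R]%classic : set R)); last by rewrite ler0n.
  rewrite /= in_itv /= => /andP[amx x1].
  by rewrite mem_set //= in_itv /= (le_trans (a_anti _ _ mn) amx) x1.
have g_lim x : D x -> limn (g^~ x) = (x `^ (c - 1))%:E.
  rewrite /D /= in_itv /= => /andP[x0 x1]; apply: lim_near_cst => //.
  near=> n; rewrite /g indicE mem_set ?mulr1 //= in_itv /= x1 andbT.
  have an : a n <= n.+1%:R^-1 by rewrite /a lef_pV2 ?posrE // ler_nat.
  apply: le_trans an (ltW _); near: n; exact: (near_infty_natSinv_lt (PosNum x0)).
have -> : (\int[mu]_(x in D) (x `^ (c - 1))%:E = \int[mu]_(x in D) limn (g^~ x))%E.
  by apply: eq_integral => x /set_mem Dx; rewrite g_lim.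
rewrite monotone_convergence //; apply: lime_le.
  apply: ereal_nondecreasing_is_cvgn => m n mn.
  by apply: ge0_le_integral_nonmeas => x Dx; [exact: g0 | exact: g_nd].
near=> n.
have -> : (\int[mu]_(x in D) g n x = \int[mu]_(x in `[a n, 1%R]) (x `^ (c - 1))%:E)%E.
  rewrite -(@setIidr _ D `[a n, 1%R]); last first.
    move=> x; rewrite /D /= !in_itv /= => /andP[anx ->].
    by rewrite (lt_le_trans (a0 n) anx).
  rewrite integral_mkcondr; apply: eq_integral => x _.
  by rewrite /g /patch indicE; case: (x \in _); rewrite ?mulr1 ?mulr0.
rewrite integral_powR_itv_a1 // lee_fin ler_piMr ?invr_ge0 ?(ltW c0) //.
by rewrite lerBlDr lerDl powR_ge0.
Unshelve. all: end_near.
Qed.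

Lemma Gamma_fun_gt0 (c : R) : 0 < c -> c <= 1 -> 0 < Gamma_fun c.
Proof.
move=> c0 c1; have c10 : c - 1 <= 0 by rewrite subr_le0.
(* [Gamma_fun] takes [fine] of the integral, so finiteness is needed too. *)
set f := fun x : R => (x `^ (c - 1) * expR (- x))%:E.
have f0 x : (0 <= f x)%E by rewrite lee_fin mulr_ge0 ?powR_ge0 ?expR_ge0.
apply: fine_gt0; apply/andP; split.
- apply: (@lt_le_trans _ _
    (\int[mu]_(x in `]0%R, +oo[) (expR (-1) * \1_(`]0%R, 1%R] : set R) x)%:E)%E).
    by rewrite integral_scaled_indic_itv_oc ?expR_ge0 // subr0 mulr1 lte_fin expR_gt0.
  apply: ge0_le_integral_nonmeas => x; rewrite /= in_itv /= andbT => x0.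
    by rewrite lee_fin mulr_ge0 ?expR_ge0.
  rewrite indicE /f lee_fin; have [/set_mem|] := boolP (x \in _); last first.
    by rewrite mulr0 mulr_ge0 ?powR_ge0 ?expR_ge0.
  rewrite /= in_itv /= => /andP[_ x1]; rewrite mulr1.
  rewrite -[leLHS]mul1r; apply: ler_pM; rewrite ?expR_ge0 ?ler_expR ?lerN2 //.
  by move: (le0_ger_powR c10 x0 x1); rewrite powR1.
- have mf : measurable_fun setT f.
    apply/measurable_EFinP/measurable_funM; first exact: measurable_powR.
    by apply: measurableT_comp => //; exact: measurable_funN.
  rewrite -/f (@itv_bndbnd_setU _ _ _ (BRight 1%R)) ?bnd_simp //.
  rewrite (@ge0_integral_setU _ _ _ mu) //; last 3 first.
  + exact: measurable_funS mf.
  + by move=> x _; exact: f0.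
  + apply/disj_setPS => x [/=]; rewrite !in_itv /= => /andP[_ x1] x1'.
    by move: x1'; rewrite ltNge x1.
  apply: (@le_lt_trans _ _ (c^-1%:E + 1%E)%E); last by rewrite -EFinD ltry.
  apply: leeD.
  + apply: le_trans (integral_powR_itv_01_le c0).
    apply: ge0_le_integral_nonmeas => [x _|x]; first exact: f0.
    rewrite /= in_itv /= => /andP[x0 _].
    by rewrite lee_fin ler_piMr ?powR_ge0 // expR_le1 oppr_le0 ltW.
  + apply: (@le_trans _ _ (\int[mu]_(x in `]1%R, +oo[) (exponential_pdf 1 x)%:E)%E).
      apply: ge0_le_integral_nonmeas => [x _|x]; first exact: f0.
      rewrite /= in_itv /= andbT => x1.
      rewrite exponential_pdfE ?mul1r ?mulN1r; last exact: ltW (lt_trans ltr01 x1).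
      rewrite lee_fin ler_piMl ?expR_ge0 //.
      by move: (le0_ger_powR c10 ltr01 (ltW x1)); rewrite powR1.
    rewrite -(integral_exponential_pdf ltr01) ge0_subset_integral //.
    * by apply/measurable_EFinP; exact: measurable_exponential_pdf.
    * by move=> x _; rewrite lee_fin exponential_pdf_ge0.
Qed.

Lemma g_dens_gt0 (c s : R) : 0 < c -> c <= 1 -> 0 < s -> 0 < g_dens c s.
Proof.
move=> c0 c1 s0; rewrite /g_dens !mulr_gt0 ?powR_gt0 ?expR_gt0 //.
by rewrite invr_gt0 Gamma_fun_gt0.
Qed.

Lemma g_dens_div_antitone (c t u : R) : 0 < c -> 2 * c <= 1 -> 0 < t -> t <= u ->
  g_dens c u / u <= g_dens c t / t.
Proof.
move=> c0 c2 t0 tu; have u0 := lt_le_trans t0 tu; have c1 : c <= 1 by lra.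
have C0 : 0 <= 2 * c `^ c / Gamma_fun c.
  by rewrite !mulr_ge0 ?powR_ge0 // invr_ge0 ltW // Gamma_fun_gt0.
have gE s : g_dens c s / s = 2 * c `^ c / Gamma_fun c *
    (s `^ (2 * c - 1) * (expR (- (c * s ^+ 2)) / s)) by rewrite /g_dens; ring.
rewrite !gE ler_wpM2l //; apply: ler_pM.
- exact: powR_ge0.
- by rewrite mulr_ge0 ?expR_ge0 // invr_ge0 ltW.
- by apply: le0_ger_powR; rewrite // subr_le0.
apply: ler_pM.
- exact: expR_ge0.
- by rewrite invr_ge0 ltW.
- rewrite ler_expR lerN2 ler_wpM2l ?(ltW c0) // !expr2.
  by apply: ler_pM => //; exact: ltW.
- by rewrite lef_pV2.
Qed.

Definition normal_dens_lb p (Om : 'M[R]_p) (b : 'rV[R]_p) : R :=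
  (Num.sqrt ((2 * pi) ^+ p * \det Om))^-1 *
    expR (- (\sum_k \sum_i `|b 0 i| * `|invmx Om i k| * `|b 0 k|) / 2).

Lemma normal_dens_ge p (Om : 'M[R]_p) (b x : 'rV[R]_p) :
  (forall i, `|x 0 i| <= `|b 0 i|) -> normal_dens_lb Om b <= normal_dens Om x.
Proof.
move=> xb; rewrite /normal_dens_lb /normal_dens ler_wpM2l ?invr_ge0 ?sqrtr_ge0 //.
rewrite ler_expR !mulNr lerN2 ler_pM2r ?invr_gt0 //.
apply: le_trans (ler_norm _) _; rewrite !mxE.
apply: le_trans (ler_norm_sum _ _ _) _; apply: ler_sum => k _.
rewrite mxE normrM -mulr_suml; apply: ler_pM => //.
apply: le_trans (ler_norm_sum _ _ _) _; apply: ler_sum => i _.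
rewrite normrM; apply: ler_pM => //.
by rewrite mxE.
Qed.

Lemma mulmx_trmx_gt0 p (v : 'rV[R]_p) : v != 0 -> 0 < (v *m v^T) 0 0.
Proof.
move=> v0; have [i vi] : exists i, v 0 i != 0.
  apply/existsP; apply: contraNT v0 => /existsPn vi0.
  by apply/eqP/matrixP => k l; rewrite !mxE (ord1 k); apply/eqP/negPn/vi0.
rewrite !mxE (bigD1 i) //= mxE ltr_pwDl //.
  by rewrite lt0r mulf_neq0 //= -expr2 sqr_ge0.
by apply: sumr_ge0 => k _; rewrite mxE -expr2 sqr_ge0.
Qed.

Lemma posdef1 p : posdef (1%:M : 'M[R]_p).
Proof. by split=> [|x x0]; rewrite ?trmx1 // mulmx1 mulmx_trmx_gt0. Qed.

Lemma posdef_convex p (A B : 'M[R]_p) (t : R) : 0 <= t <= 1 ->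
  posdef A -> posdef B -> posdef (t *: A + (1 - t) *: B).
Proof.
move=> /andP[t0 t1] [At Apos] [Bt Bpos]; split.
  by rewrite linearD !linearZ /= At Bt.
move=> x x0; have -> : (x *m (t *: A + (1 - t) *: B) *m x^T) 0 0
    = t * (x *m A *m x^T) 0 0 + (1 - t) * (x *m B *m x^T) 0 0.
  by rewrite mulmxDr mulmxDl -!scalemxAr -!scalemxAl !mxE.
have [->|tn0] := eqVneq t 0; first by rewrite mul0r add0r subr0 mul1r Bpos.
apply: ltr_wpDr; first by rewrite mulr_ge0 ?subr_ge0 // ltW // Bpos.
by rewrite mulr_gt0 ?Apos // lt_neqAle eq_sym tn0.
Qed.

Lemma posdef_det_neq0 p (A : 'M[R]_p) : posdef A -> \det A != 0.
Proof.
move=> [_ Apos]; apply/negP => /det0P [v v0 vA].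
by move: (Apos v v0); rewrite vA mul0mx mxE ltxx.
Qed.

Lemma posdef_det_gt0 p (Om : 'M[R]_p) : posdef Om -> 0 < \det Om.
Proof.
(* t |-> det (t Om + (1 - t) I) is a polynomial that equals 1 at t = 0 and
   never vanishes on [0, 1], so by the IVT it is still positive at t = 1. *)
move=> Ompd.
pose A : 'M[{poly R}]_p := \matrix_(i, j) ('X * (Om i j)%:P + (1 - 'X) * (i == j)%:R).
have detA t : (\det A).[t] = \det (t *: Om + (1 - t) *: 1%:M).
  rewrite -[_.[t]]/(horner_eval t (\det A)) -det_map_mx; congr (\det _).
  apply/matrixP => i j; rewrite !mxE /horner_eval /=.
  change (('X * (Om i j)%:P + (1 - 'X) * (i == j)%:R).[t]
    = t * Om i j + (1 - t) * (i == j)%:R); rewrite !hornerE.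
  by case: (i == j); rewrite ?hornerE.
rewrite ltNge; apply/negP => det_le0.
have sign_change : (- \det A).[0] <= 0 <= (- \det A).[1].
  rewrite !hornerN !detA subr0 subrr !scale0r !scale1r add0r addr0 det1.
  by rewrite oppr_le0 ler01 oppr_ge0.
have [x x01 /rootP] := poly_ivt ler01 sign_change.
apply/eqP; rewrite hornerN detA oppr_eq0.
by apply/posdef_det_neq0/posdef_convex => //; exact: posdef1.
Qed.

Lemma upd_gt0 n (s : nat -> R) (t : R) : (forall i, (i < n)%N -> 0 < s i) -> 0 < t ->
  forall i, (i < n.+1)%N -> 0 < upd s n t i.
Proof.
move=> s0 t0 i; rewrite ltnS leq_eqVlt /upd => /orP[/eqP ->|lt_in].
  by rewrite eqxx.
by rewrite (ltn_eqF lt_in) s0.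
Qed.

Lemma iint_pos_le n (F G : (nat -> R) -> \bar R) :
  (forall s, (forall i, (i < n)%N -> 0 < s i) -> (0 <= F s)%E) ->
  (forall s, (forall i, (i < n)%N -> 0 < s i) -> (F s <= G s)%E) ->
  (iint_pos n F <= iint_pos n G)%E.
Proof.
elim: n F G => [|n IH] F G F0 FG /=; first exact: FG.
apply: IH => s s0.
  by apply: integral_ge0 => t; rewrite /= in_itv /= andbT => t0; exact/F0/upd_gt0.
by apply: ge0_le_integral_nonmeas => t; rewrite /= in_itv /= andbT => t0;
  [exact/F0/upd_gt0 | exact/FG/upd_gt0].
Qed.

Lemma iint_pos_prod (n : nat) (h : nat -> R -> R) (a : nat -> R) (K : R) :
  0 <= K -> (forall i x, 0 <= h i x) ->
  (forall i, measurable_fun (`]0%R, +oo[ : set R) (h i)) ->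
  (forall i, \int[mu]_(t in `]0%R, +oo[) (h i t)%:E = (a i)%:E)%E ->
  iint_pos n (fun s => (K * \prod_(i < n) h i (s i))%:E) = (K * \prod_(i < n) a i)%:E.
Proof.
move=> + h0 mh ha; elim: n K => [|n IH] K K0 /=; first by rewrite !big_ord0.
have an0 : 0 <= a n.
  by rewrite -lee_fin -ha; apply: integral_ge0 => x _; rewrite lee_fin.
have split_last s t : (K * \prod_(i < n.+1) h i (upd s n t i))%:E =
    ((K * \prod_(i < n) h i (s i))%:E * (h n t)%:E)%E.
  rewrite big_ord_recr /= /upd eqxx -EFinM mulrA; congr (_ * _ * _)%:E.
  by apply: eq_bigr => i _; rewrite /= (ltn_eqF (ltn_ord i)).
have -> : (fun s : nat -> R => \int[mu]_(t in `]0%R, +oo[)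
    (K * \prod_(i < n.+1) h i (upd s n t i))%:E)%E =
    (fun s => ((K * a n) * \prod_(i < n) h i (s i))%:E).
  apply/funext => s.
  under eq_integral => t _ do rewrite split_last.
  rewrite ge0_integralZl_EFin //; last by apply: mulr_ge0 => //; apply: prodr_ge0.
  - by rewrite ha -EFinM mulrAC.
  - by move=> x _; rewrite lee_fin.
  - exact: (measurable_EFinP _ (h n)).2 (mh n).
by rewrite IH ?mulr_ge0 // big_ord_recr /= mulrA mulrAC -!mulrA.
Qed.

Lemma normal_dens_lb_gt0 p (Om : 'M[R]_p) (b : 'rV[R]_p) :
  posdef Om -> 0 < normal_dens_lb Om b.
Proof.
move=> Ompd; rewrite /normal_dens_lb mulr_gt0 ?expR_gt0 // invr_gt0 sqrtr_gt0.
by rewrite mulr_gt0 ?exprn_gt0 ?mulr_gt0 ?pi_gt0 ?posdef_det_gt0.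
Qed.

Lemma sng_density_ge_box p (c : R) (Om : 'M[R]_p) (b : 'rV[R]_p)
    (u v : nat -> R) (N : R) :
  0 < c -> 2 * c <= 1 -> 0 <= N -> (forall i, 0 <= u i < v i) ->
  (forall s : nat -> R, (forall i, (i < p)%N -> u i < s i <= v i) ->
     N <= normal_dens Om (\row_(i < p) (b 0 i / s i))) ->
  ((N * \prod_(i < p) (g_dens c (v i) / v i * (v i - u i)))%:E <= sng_density c Om b)%E.
Proof.
move=> c0 c2 N0 uv normal_ge; have c1 : c <= 1 by lra.
pose m i := g_dens c (v i) / v i.
have m0 i : 0 <= m i.
  have /andP[ui uvi] := uv i.
  by rewrite ltW // divr_gt0 ?g_dens_gt0 // (le_lt_trans ui uvi).
pose h i t := m i * \1_(`]u i, v i] : set R) t.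
have h0 i t : 0 <= h i t by rewrite mulr_ge0.
rewrite -(@iint_pos_prod p h (fun i => m i * (v i - u i)) N) //; first last.
- move=> i; have /andP[ui uvi] := uv i.
  by rewrite integral_scaled_indic_itv_oc.
- by move=> i; apply/measurable_funM => //; exact: measurable_indic.
apply: iint_pos_le => s s0; first by rewrite lee_fin mulr_ge0 ?prodr_ge0.
rewrite lee_fin; have [box|] := pselect (forall i, (i < p)%N -> u i < s i <= v i).
  rewrite mulrC; apply: ler_pM; rewrite ?prodr_ge0 //.
    apply: ler_prod => i _; rewrite h0 /h indicE mem_set /=; last exact: box.
    rewrite mulr1 mulrC.
    apply: g_dens_div_antitone => //; first exact: s0.
    by have /andP[] := box i (ltn_ord i).
  exact: normal_ge.
move=> /existsNP [i /not_implyP [ip si]].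
rewrite (bigD1 (Ordinal ip)) //= /h indicE memNset // mulr0 mul0r mulr0.
apply: mulr_ge0; first apply: prodr_ge0 => k _.
  by rewrite ltW // mulr_gt0 ?invr_gt0 ?g_dens_gt0 ?s0.
by rewrite /normal_dens mulr_ge0 ?invr_ge0 ?sqrtr_ge0 ?expR_ge0.
Qed.

Lemma sng_density_ge_zero_coord p (c : R) (Om : 'M[R]_p) (b : 'rV[R]_p)
    (j : 'I_p) (e : R) :
  0 < c -> 2 * c <= 1 -> b 0 j = 0 -> 0 < e ->
  ((normal_dens_lb Om b * g_dens c e * \prod_(i < p | i != j) (g_dens c 2 / 2))%:E
     <= sng_density c Om b)%E.
Proof.
move=> c0 c2 bj e0.
pose u (i : nat) : R := if i == j then 0 else 1.
pose v (i : nat) : R := if i == j then e else 2.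
apply: le_trans (@sng_density_ge_box _ _ _ _ u v (normal_dens_lb Om b) c0 c2 _ _ _);
  last 3 first.
- by rewrite /normal_dens_lb mulr_ge0 ?invr_ge0 ?sqrtr_ge0 ?expR_ge0.
- move=> i; rewrite /u /v.
  by case: ifP => _; apply/andP; split; rewrite ?e0 ?ler01 ?ltr1n.
- move=> s box; apply: normal_dens_ge => i; rewrite mxE.
  have [->|ij] := eqVneq i j; first by rewrite bj mul0r normr0.
  have /andP[s1 _] := box i (ltn_ord i); rewrite /u ifN in s1; last exact: ij.
  have s0 : 0 < s i := lt_trans ltr01 s1.
  by rewrite normrM normfV (gtr0_norm s0) ler_pdivrMr // ler_peMr // ltW.
rewrite lee_fin -mulrA [X in _ <= _ * X](bigD1 j) //= /u /v eqxx subr0 divfK ?gt_eqF //.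
rewrite [X in _ <= _ * (_ * X)](eq_bigr (fun=> g_dens c 2 / 2)) // => i ij.
by rewrite !ifN // (_ : 2 - 1 = 1 :> R) ?mulr1 //; lra.
Qed.

Lemma ge_powR_lt0_eqy (K r : R) (x : \bar R) : 0 < K -> r < 0 ->
  (forall e, 0 < e -> e <= 1 -> ((K * e `^ r)%:E <= x)%E) -> x = +oo%E.
Proof.
move=> K0 r0 x_ge.
suff x_unbounded M : 0 < M -> (M%:E <= x)%E.
  case: x {x_ge} x_unbounded => [x|//|/(_ 1 ltr01)//].
  have x1_gt0 : 0 < `|x| + 1 by have := normr_ge0 x; lra.
  move=> /(_ _ x1_gt0); rewrite lee_fin => x_big; exfalso.
  by have := ler_norm x; lra.
move=> M0; pose Y := Num.max 1 (M / K).
have Y1 : 1 <= Y by rewrite le_max lexx.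
pose e := Y `^ r^-1.
have e0 : 0 < e by rewrite powR_gt0 // (lt_le_trans ltr01 Y1).
have e1 : e <= 1.
  have r_inv_le0 : r^-1 <= 0 by rewrite invr_le0 ltW.
  by move: (le0_ger_powR r_inv_le0 ltr01 Y1); rewrite powR1.
have eY : e `^ r = Y by rewrite -powRrM mulVf ?lt_eqF // powRr1 // (le_trans ler01 Y1).
apply: le_trans (x_ge e e0 e1); rewrite eY lee_fin -ler_pdivrMl //.
by rewrite mulrC le_max lexx orbT.
Qed.

End sng_prior.

Theorem proposition2p2 (R : realType) (p : nat) (Om : 'M[R]_p) (c : R)
    (b : 'rV[R]_p) :
  (1 <= p)%N -> posdef Om -> 0 < c -> c < 1 / 2 ->
  (exists j : 'I_p, b 0 j = 0) ->
  sng_density c Om b = +oo%E.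
Proof.
move=> _ Ompd c0 c_lt_half [j bj].
have c2 : 2 * c <= 1 by lra.
have c1 : c <= 1 by lra.
set C := 2 * c `^ c / Gamma_fun c.
set A := \prod_(i < p | i != j) (g_dens c 2 / 2).
have C0 : 0 < C by rewrite /C !mulr_gt0 ?powR_gt0 ?invr_gt0 ?Gamma_fun_gt0.
have A0 : 0 < A by rewrite prodr_gt0 // => i _; rewrite divr_gt0 ?g_dens_gt0.
apply: (@ge_powR_lt0_eqy _ (normal_dens_lb Om b * C * expR (- c) * A) (2 * c - 1)).
- by rewrite mulr_gt0 // mulr_gt0 ?expR_gt0 // mulr_gt0 // normal_dens_lb_gt0.
- lra.
move=> e e0 e1; apply: le_trans (sng_density_ge_zero_coord Om c0 c2 bj e0).
have -> : normal_dens_lb Om b * C * expR (- c) * A * e `^ (2 * c - 1)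
    = normal_dens_lb Om b * (C * e `^ (2 * c - 1) * expR (- c)) * A by ring.
rewrite lee_fin ler_pM2r // ler_pM2l ?normal_dens_lb_gt0 //.
rewrite /g_dens -/C ler_pM2l; last by rewrite mulr_gt0 // powR_gt0.
by rewrite ler_expR lerN2 ler_piMr ?(ltW c0) // expr_le1 // ltW.
Qed.
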